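(* Let $\mathcal{R}$ be a ring and let $(\mathcal{C}^{\bullet},\partial)$ be a bigraded cochain complex of $\mathcal{R}$-modules as described in the context. Then there are two commutative diagrams with exact rows and exact columns. The first has rows \[ 0\to B^{2}(\mathcal{C},\partial)\cap\mathcal{C}^{2,0}\hookrightarrow B^{2}(\mathcal{C},\partial)\xrightarrow{\pi_{1}}\mathcal{B}^{2}_{1}\to0, \] \[ 0\to Z^{2}(\mathcal{N}_{0},\overline{\partial})\hookrightarrow Z^{2}(\mathcal{C},\partial)\xrightarrow{\pi_{1}}\ker(\rho_{2})\to0, \] \[ 0\to\frac{Z^{2}(\mathcal{N}_{0},\overline{\partial})}{B^{2}(\mathcal{C},\partial)\cap\mathcal{C}^{2,0}}\to H^{2}(\mathcal{C},\partial)\to\frac{\ker(\rho_{2})}{\mathcal{B}^{2}_{1}}\to0, \] and the second has rows \[ 0\to\mathcal{B}^{2}_{1}\cap\mathcal{C}^{1,1}\hookrightarrow\mathcal{B}^{2}_{1}\xrightarrow{\pi_{2}}B^{2}(\mathcal{C}^{0,\bullet},\partial_{0,1})\to0, \] \[ 0\to\ker(\varrho_{2})\hookrightarrow\ker(\rho_{2})\xrightarrow{\pi_{2}}\mathcal{Z}^{2}_{2}\to0, \] \[ 0\to\frac{\ker(\varrho_{2})}{\mathcal{B}^{2}_{1}\cap\mathcal{C}^{1,1}}\to\frac{\ker(\rho_{2})}{\mathcal{B}^{2}_{1}}\to\frac{\mathcal{Z}^{2}_{2}}{B^{2}(\mathcal{C}^{0,\bullet},\partial_{0,1})}\to0. \]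 In each diagram the vertical maps from the first to the second row are inclusions, those from the second to the third row are the canonical quotient projections, and the maps of the third row are induced by those of the second row.
   Context: Setting: $\mathcal{C}^{\bullet}=\bigoplus_{k}\mathcal{C}^{k}$ is a graded $\mathcal{R}$-module with compatible bigrading $\mathcal{C}^{k}=\bigoplus_{p+q=k}\mathcal{C}^{p,q}$, $\mathcal{C}^{p,q}=\{0\}$ if $p<0$ or $q<0$; $\partial$ is $\mathcal{R}$-linear of degree $1$, $\partial^{2}=0$, and $\partial=\partial_{2,-1}+\partial_{1,0}+\partial_{0,1}$ with $\partial_{i,j}(\mathcal{C}^{p,q})\subseteq\mathcal{C}^{p+i,q+j}$. For $\eta\in\mathcal{C}^{k}$, $\eta_{p,q}$ is its $\mathcal{C}^{p,q}$-component. $G^{q}\mathcal{C}:=\bigoplus_{j\geq q}\mathcal{C}^{i,j}$ and $\pi_{q}:\mathcal{C}\to G^{q}\mathcal{C}$ is the projection along the bigrading. $Z,B,H$ denote cocycles, coboundaries, cohomology; $(\mathcal{C}^{0,\bullet},\partial_{0,1})$ is a cochain complex. Let $\mathcal{N}^{p,q}:=\ker(\partial_{0,1}|_{\mathcal{C}^{p,q}})\cap\ker(\partial_{2,-1}|_{\mathcal{C}^{p,q}})$ and, for $q\ge0$, $\mathcal{N}_{q}:=\bigoplus_{p}\mathcal{N}^{p-q,q}$ (the degree-$m$ part being $\mathcal{N}^{m-q,q}$); each $\mathcal{N}_{q}$ is a subcomplex of $(\mathcal{C},\partial)$, with differential $\overline{\partial}:=\partial|_{\mathcal{N}_q}=\partial_{1,0}|_{\mathcal{N}_q}$.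 Let $\mathcal{M}^{k}:=\{\eta\in\mathcal{C}^{k}\mid(\partial\eta)_{i,j}\in B^{k+1}(\mathcal{N}_{j},\overline{\partial})\ \text{for all } i+j=k+1\}$, $\mathcal{Z}^{k}_{q}:=\{\pi_{q}(\eta)\mid\eta\in\mathcal{M}^{k},\ \pi_{q}(\partial\eta)=0\}$ and $\mathcal{B}^{k}_{q}:=\pi_{q}(B^{k}(\mathcal{C},\partial))$. Let $\mathcal{A}^{k}:=\{\pi_{1}(\eta)\mid\eta\in\mathcal{C}^{k},\ \pi_{1}(\partial\eta)=0\}$ and $\mathcal{J}^{k}:=\mathcal{A}^{k}\cap\mathcal{C}^{k-1,1}$. For $\xi\in\mathcal{A}^{k}$ and any $\eta\in\mathcal{C}^{k}$ with $\pi_{1}\eta=\xi$, $\pi_{1}(\partial\eta)=0$, the element $\partial_{2,-1}\xi_{k-1,1}+\partial_{1,0}\eta_{k,0}$ is a $(k+1)$-cocycle of $(\mathcal{N}_{0},\overline{\partial})$ whose class depends only on $\xi$; this defines the linear map $\rho_{k}:\mathcal{A}^{k}\to H^{k+1}(\mathcal{N}_{0},\overline{\partial})$, $\rho_{k}(\xi):=[\partial_{2,-1}\xi_{k-1,1}+\partial_{1,0}\eta_{k,0}]$, and $\varrho_{k}:=\rho_{k}|_{\mathcal{J}^{k}}$. *)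

From HB Require Import structures.
From mathcomp Require Import all_boot all_algebra.
Set Implicit Arguments. Unset Strict Implicit. Unset Printing Implicit Defensive.
Import GRing.Theory.
Local Open Scope ring_scope.

(** The bigraded pieces are [D p q] (= C^{p,q}, p q : nat, so C^{p,q} = 0 for
    negative indices is built in).
    The total space is represented by [Tot] = families (x p q)_{p,q};
    an element of C^k is a family supported on {p+q = k}. *)

Section Bigraded.
Variable R : pzRingType.
Variable D : nat -> nat -> lmodType R.
Variable d21 : forall p q, {linear D p q.+1 -> D p.+2 q}.
Variable d10 : forall p q, {linear D p q -> D p.+1 q}.
Variable d01 : forall p q, {linear D p q -> D p q.+1}.

Definition Tot := forall p q, D p q.
Definition tzero : Tot := fun p q => 0.
Definition tadd (x y : Tot) : Tot := fun p q => x p q + y p q.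
Definition topp (x : Tot) : Tot := fun p q => - x p q.
Definition tscale (a : R) (x : Tot) : Tot := fun p q => a *: x p q.
Definition tsub (x y : Tot) : Tot := tadd x (topp y).
Definition tid (x : Tot) : Tot := x.

Definition inDeg (k : nat) (x : Tot) : Prop :=
  forall p q, (p + q)%N <> k -> x p q = 0.
Definition inBideg (p q : nat) (x : Tot) : Prop :=
  forall p' q', (p', q') <> (p, q) -> x p' q' = 0.
Definition bproj (p q : nat) (x : Tot) : Tot :=
  fun p' q' => if (p' == p) && (q' == q) then x p' q' else 0.
(* pi_q : projection onto G^q C = \bigoplus_{j >= q} C^{i,j} *)
Definition piq (q : nat) (x : Tot) : Tot :=
  fun p' q' => if (q <= q')%N then x p' q' else 0.

Definition D21 (x : Tot) : Tot := fun p q =>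
  match p as p0 return D p0 q with
  | p'.+2 => d21 p' q (x p' q.+1)
  | _ => 0
  end.
Definition D10 (x : Tot) : Tot := fun p q =>
  match p as p0 return D p0 q with
  | p'.+1 => d10 p' q (x p' q)
  | 0 => 0
  end.
Definition D01 (x : Tot) : Tot := fun p q =>
  match q as q0 return D p q0 with
  | q'.+1 => d01 p q' (x p q')
  | 0 => 0
  end.
Definition dd (x : Tot) : Tot := tadd (tadd (D21 x) (D10 x)) (D01 x).

Definition ZC (k : nat) (x : Tot) : Prop := inDeg k x /\ dd x = tzero.
(* B^{k+1}(C, d) *)
Definition cobC (k : nat) (x : Tot) : Prop := exists y, inDeg k y /\ x = dd y.

Definition isN (p q : nat) (x : Tot) : Prop :=
  inBideg p q x /\ D01 x = tzero /\ D21 x = tzero.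
(* degree-m part of N_q, namely N^{m-q,q} (= 0 when m < q) *)
Definition inNq (q m : nat) (x : Tot) : Prop :=
  if (q <= m)%N then isN (m - q) q x else x = tzero.
Definition ZN (q m : nat) (x : Tot) : Prop := inNq q m x /\ dd x = tzero.
(* B^{m+1}(N_q, dbar) *)
Definition cobN (q m : nat) (x : Tot) : Prop :=
  exists y, inNq q m y /\ x = dd y.
(* B^{m+1}(C^{0,.}, d_{0,1}) (viewed inside C) *)
Definition cob0 (m : nat) (x : Tot) : Prop :=
  exists y, inBideg 0 m y /\ x = D01 y.

Definition inM (k : nat) (eta : Tot) : Prop :=
  inDeg k eta /\
  forall i j, (i + j)%N = k.+1 -> cobN j k (bproj i j (dd eta)).
Definition calZ (k q : nat) (x : Tot) : Prop :=
  exists eta, inM k eta /\ piq q (dd eta) = tzero /\ x = piq q eta.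
(* \mathcal{B}^{k+1}_q = pi_q(B^{k+1}(C, d)) *)
Definition calB (k q : nat) (x : Tot) : Prop :=
  exists eta, inDeg k eta /\ x = piq q (dd eta).
Definition calA (k : nat) (xi : Tot) : Prop :=
  exists eta, inDeg k eta /\ piq 1 (dd eta) = tzero /\ xi = piq 1 eta.
(* representative  d_{2,-1} xi_{k-1,1} + d_{1,0} eta_{k,0}  of rho_k(xi) *)
Definition rho_rep (k : nat) (xi eta : Tot) : Tot :=
  tadd (D21 (bproj k.-1 1 xi)) (D10 (bproj k 0 eta)).
(* ker(rho_k): xi \in A^k whose class rho_k(xi) \in H^{k+1}(N_0, dbar)
   vanishes, i.e. the representative lies in B^{k+1}(N_0, dbar)
   (for any admissible choice of eta). *)
Definition kerrho (k : nat) (xi : Tot) : Prop :=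
  calA k xi /\
  forall eta, inDeg k eta -> piq 1 eta = xi -> piq 1 (dd eta) = tzero ->
    cobN 0 k (rho_rep k xi eta).
(* ker(varrho_k), varrho_k = rho_k restricted to J^k = A^k \cap C^{k-1,1} *)
Definition kervarrho (k : nat) (xi : Tot) : Prop :=
  kerrho k xi /\ inBideg k.-1 1 xi.

Definition pI (A B : Tot -> Prop) (x : Tot) : Prop := A x /\ B x.
Definition p0 (x : Tot) : Prop := x = tzero.

(** Subquotients: a pair (A, B) stands for the module A / B, where B and A
    are submodules of the total space with B \subseteq A.  A submodule A is
    the subquotient (A, 0). *)
Definition SQ := ((Tot -> Prop) * (Tot -> Prop))%type.

Definition submod (A : Tot -> Prop) : Prop :=
  A tzero /\ (forall x y, A x -> A y -> A (tadd x y)) /\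
  (forall a x, A x -> A (tscale a x)).
Definition subquot (X : SQ) : Prop :=
  submod X.1 /\ submod X.2 /\ (forall x, X.2 x -> X.1 x).
Definition induced (f : Tot -> Tot) (X Y : SQ) : Prop :=
  (forall x, X.1 x -> Y.1 (f x)) /\ (forall x, X.2 x -> Y.2 (f x)).

Definition ses (X Y Z : SQ) (f g : Tot -> Tot) : Prop :=
  [/\ subquot X, subquot Y, subquot Z, induced f X Y & induced g Y Z] /\
  [/\ (* injectivity of f *)
      (forall x, X.1 x -> Y.2 (f x) -> X.2 x),
      (* g o f = 0 *)
      (forall x, X.1 x -> Z.2 (g (f x))),
      (* ker g \subseteq im f *)
      (forall y, Y.1 y -> Z.2 (g y) -> exists2 x, X.1 x & Y.2 (tsub y (f x)))
    & (* surjectivity of g *)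
      (forall z, Z.1 z -> exists2 y, Y.1 y & Z.2 (tsub (g y) z))].

Definition commsq (X Y' : SQ) (f u v f' : Tot -> Tot) : Prop :=
  forall x, X.1 x -> Y'.2 (tsub (v (f x)) (f' (u x))).

Definition diagram33 (X11 X12 X13 X21 X22 X23 X31 X32 X33 : SQ)
  (f1 g1 f2 g2 f3 g3 : Tot -> Tot)
  (u1 v1 u2 v2 u3 v3 : Tot -> Tot) : Prop :=
  [/\ ses X11 X12 X13 f1 g1, ses X21 X22 X23 f2 g2 & ses X31 X32 X33 f3 g3] /\
  [/\ ses X11 X21 X31 u1 v1, ses X12 X22 X32 u2 v2 & ses X13 X23 X33 u3 v3] /\
  [/\ commsq X11 X22 f1 u1 u2 f2, commsq X12 X23 g1 u2 u3 g2,
      commsq X21 X32 f2 v1 v2 f3 & commsq X22 X33 g2 v2 v3 g3].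

End Bigraded.

(* Both diagrams are the 3x3 diagram of a linear map f and submodules B <= A, whose
   rows are 0 -> B /\ ker f -> B -> f(B) -> 0, the same sequence for A, and the induced
   sequence of quotients; its exactness is elementary.  The first diagram is the case
   f = pi_1, A = Z^2(C), B = B^2(C); the second the case f = pi_2, A = ker rho_2,
   B = \mathcal{B}^2_1.  What remains is to recognise the modules of the statement:
   - in a fixed total degree, an element of G^q lies in C^{p,q} iff pi_{q+1} kills it;
   - if pi_1(d eta) = 0 then d eta is itself the representative of rho_k(pi_1 eta), so
     pi_1 eta is in ker rho_k iff eta can be corrected by an element of N^{k,0} into a
     cocycle: ker rho_k = pi_1(Z^k);
   - if eta is in M^k and pi_2(d eta) = 0, the two components of d eta, in bidegrees
     (k+1,0) and (k,1), are coboundaries of elements of N^{k,0} and N^{k-1,1};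
     subtracting these from eta gives a cocycle, so \mathcal{Z}^k_2 = pi_2(Z^k). *)

From mathcomp Require Import all_boot all_algebra zify.
From Stdlib Require Import FunctionalExtensionality PropExtensionality.
Set Implicit Arguments. Unset Strict Implicit. Unset Printing Implicit Defensive.
Import GRing.Theory.

Section Subquotients.
Local Open Scope ring_scope.
Variables (R : pzRingType) (D : nat -> nat -> lmodType R).
Local Notation T := (Tot D).
Local Notation t0 := (tzero D).
Local Notation P0 := (@p0 R D).
Local Notation ID := (@tid R D).

Lemma tot_ext (x y : T) : (forall p q, x p q = y p q) -> x = y.
Proof. by move=> exy; do 2 apply: functional_extensionality_dep => ?. Qed.

Lemma tot_app (x y : T) p q : x = y -> x p q = y p q.
Proof. by move->. Qed.

Lemma pred_ext (A B : T -> Prop) : (forall x, A x <-> B x) -> A = B.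
Proof.
by move=> eAB; apply: functional_extensionality => x; apply: propositional_extensionality.
Qed.

Lemma tsubxx (x : T) : tsub x x = t0.
Proof. by apply: tot_ext => p q; rewrite /tsub /tadd /topp subrr. Qed.

Lemma tsubx0 (x : T) : tsub x t0 = x.
Proof. by apply: tot_ext => p q; rewrite /tsub /tadd /topp /tzero subr0. Qed.

Lemma tsubKr (x y : T) : tsub x (tsub x y) = y.
Proof. by apply: tot_ext => p q; rewrite /tsub /tadd /topp opprB addrC subrK. Qed.

Lemma tsubN1 (x y : T) : tsub x y = tadd x (tscale (-1) y).
Proof. by apply: tot_ext => p q; rewrite /tsub /tadd /topp /tscale scaleN1r. Qed.

Record tlinear (f : T -> T) : Prop := TLinear {
  tlinearD : forall x y, f (tadd x y) = tadd (f x) (f y);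
  tlinearZ : forall a x, f (tscale a x) = tscale a (f x) }.

Lemma tlinear0 f : tlinear f -> f t0 = t0.
Proof.
move=> [_ fZ]; have z0 a : tscale a t0 = t0 by apply: tot_ext => p q; rewrite /tscale scaler0.
by rewrite -(z0 0) fZ; apply: tot_ext => p q; rewrite /tscale !scale0r.
Qed.

Lemma tlinearB f : tlinear f -> forall x y, f (tsub x y) = tsub (f x) (f y).
Proof. by move=> [fD fZ] x y; rewrite !tsubN1 fD fZ. Qed.

Definition kerp (A : T -> Prop) (f : T -> T) : T -> Prop := fun x => A x /\ f x = t0.
Definition imgp (f : T -> T) (A : T -> Prop) : T -> Prop := fun y => exists2 x, A x & y = f x.

Lemma imgp_comp (f g h : T -> T) (A : T -> Prop) :
  (forall x, g (f x) = h x) -> imgp g (imgp f A) = imgp h A.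
Proof.
move=> gfh; apply: pred_ext => z; split=> [[_ [x Ax ->] ->]|[x Ax ->]]; first by exists x.
by exists (f x); [exists x | rewrite gfh].
Qed.

Lemma imgp_sub (f : T -> T) (A B : T -> Prop) :
  (forall x, B x -> A x) -> forall y, imgp f B y -> imgp f A y.
Proof. by move=> BA y [x /BA Ax ->]; exists x. Qed.

Lemma kerp_p0 f : tlinear f -> kerp P0 f = P0.
Proof. by move=> lf; apply: pred_ext => x; split=> [[]|->] //; split; rewrite ?tlinear0. Qed.

Lemma imgp_p0 f : tlinear f -> imgp f P0 = P0.
Proof.
move=> lf; apply: pred_ext => y; split=> [[x -> ->]|->]; first exact: tlinear0.
by exists t0; rewrite ?tlinear0.
Qed.

Lemma submod_p0 : submod P0.
Proof.
split=> //; split=> [x y -> ->|a x ->]; apply: tot_ext => p q;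
  by rewrite /tadd /tscale /tzero ?addr0 ?scaler0.
Qed.

Lemma submodB (A : T -> Prop) x y : submod A -> A x -> A y -> A (tsub x y).
Proof. by move=> [_ [AD AZ]] Ax Ay; rewrite tsubN1; apply/AD/AZ. Qed.

Lemma submod_inDeg k : submod (@inDeg R D k).
Proof.
split=> //; split=> [x y dx dy p q pq|a x dx p q pq];
  by rewrite /tadd /tscale ?dx ?dy ?addr0 ?scaler0.
Qed.

Lemma submod_kerp A f : submod A -> tlinear f -> submod (kerp A f).
Proof.
move=> [A0 [AD AZ]] [fD fZ]; split; first by split; rewrite ?tlinear0.
split=> [x y [Ax fx] [Ay fy]|a x [Ax fx]]; split; rewrite ?fD ?fZ ?fx ?fy; auto.
  by apply: tot_ext => p q; rewrite /tadd /tzero addr0.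
by apply: tot_ext => p q; rewrite /tscale /tzero scaler0.
Qed.

Lemma submod_imgp A f : submod A -> tlinear f -> submod (imgp f A).
Proof.
move=> [A0 [AD AZ]] [fD fZ]; split; first by exists t0; rewrite ?tlinear0.
split=> [_ _ [x Ax ->] [y Ay ->]|a _ [x Ax ->]].
  by exists (tadd x y); [apply: AD | rewrite fD].
by exists (tscale a x); [apply: AZ | rewrite fZ].
Qed.

Lemma subquotP (A B : T -> Prop) :
  submod A -> submod B -> (forall x, B x -> A x) -> subquot (A, B).
Proof. by split; last split. Qed.

Lemma subquot_p0 (C : T -> Prop) : submod C -> subquot (C, P0).
Proof. by move=> subC; apply: subquotP (submod_p0) _ => // x ->; case: subC. Qed.

Section KernelImage.
Variables (A B : T -> Prop) (f : T -> T).
Hypotheses (subA : submod A) (subB : submod B) (BA : forall x, B x -> A x).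
Hypothesis lin_f : tlinear f.

Lemma ses_sub_quot : ses (B, P0) (A, P0) (A, B) ID ID.
Proof.
split; split.
- exact: subquot_p0.
- exact: subquot_p0.
- by split.
- by split=> x //; apply: BA.
- by split=> x //= ->; case: subB.
- by [].
- by [].
- by move=> y Ay By; exists y => //; rewrite /tid tsubxx.
- by move=> x Ax; exists x => //; rewrite /tid tsubxx; case: subB.
Qed.

(* Exactness in the middle: if f y = f b with b in B, then y - b lies in ker f. *)
Lemma ses_kerp_imgp :
  ses (kerp A f, kerp B f) (A, B) (imgp f A, imgp f B) ID f.
Proof.
have [kA kB] := (submod_kerp subA lin_f, submod_kerp subB lin_f).
have [iA iB] := (submod_imgp subA lin_f, submod_imgp subB lin_f).
split; split.
- by apply: subquotP => // x [/BA].
- exact: subquotP.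
- by apply: subquotP => //; apply: imgp_sub.
- by split=> x [].
- by split=> x Ax; exists x.
- by move=> x [_ fx0] Bx; split.
- by move=> x [_ fx0]; exists t0; [case: subB | rewrite /tid fx0 tlinear0].
- move=> y Ay [b Bb fyb]; exists (tsub y b).
    by split; [apply: submodB => //; apply: BA | rewrite (tlinearB lin_f) fyb tsubxx].
  by rewrite /tid tsubKr.
- by move=> _ [y Ay ->]; exists y => //; exists t0; [case: subB | rewrite tsubxx tlinear0].
Qed.

End KernelImage.

Lemma diagram33_kerp_imgp (A B : T -> Prop) f :
  submod A -> submod B -> (forall x, B x -> A x) -> tlinear f ->
  diagram33
    (kerp B f, P0) (B, P0) (imgp f B, P0)
    (kerp A f, P0) (A, P0) (imgp f A, P0)
    (kerp A f, kerp B f) (A, B) (imgp f A, imgp f B)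
    ID f ID f ID f ID ID ID ID ID ID.
Proof.
move=> subA subB BA lin_f.
have commsq_id (X Y : SQ D) g : Y.2 t0 -> commsq X Y g ID ID g.
  by move=> Y0 x _; rewrite /tid tsubxx.
have row0 C : submod C -> ses (kerp C f, P0) (C, P0) (imgp f C, P0) ID f.
  move=> subC; have P0C x : P0 x -> C x by move->; case: subC.
  by have := ses_kerp_imgp subC submod_p0 P0C lin_f; rewrite kerp_p0 // imgp_p0.
split; [|split]; split.
- exact: row0.
- exact: row0.
- exact: ses_kerp_imgp.
- by apply: ses_sub_quot; [exact: submod_kerp.. | move=> x [/BA]].
- exact: ses_sub_quot.
- by apply: ses_sub_quot; [exact: submod_imgp.. | exact: imgp_sub].
- exact: commsq_id.
- exact: commsq_id.
- by apply: commsq_id; case: subB.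
- by apply: commsq_id; case: (submod_imgp subB lin_f).
Qed.

End Subquotients.

Arguments submod_inDeg {R D} k.

Section Bigraded.
Local Open Scope ring_scope.
Variables (R : pzRingType) (D : nat -> nat -> lmodType R).
Variable d21 : forall p q, {linear D p q.+1 -> D p.+2 q}.
Variable d10 : forall p q, {linear D p q -> D p.+1 q}.
Variable d01 : forall p q, {linear D p q -> D p q.+1}.
Local Notation T := (Tot D).
Local Notation t0 := (tzero D).
Local Notation dd := (dd d21 d10 d01).

(* Rewrites to 0 every component of a homogeneous element lying outside its (bi)degree. *)
Ltac vanish := repeat match goal with
  | H : inDeg _ ?x |- context [?x ?a ?b] => rewrite (H a b); last lia
  | H : inBideg _ _ ?x |- context [?x ?a ?b] =>
      rewrite (H a b); last by move=> /pair_equal_spec[] *; lia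
  end; rewrite /tzero ?linear0 ?addr0 ?add0r.

Lemma tlinear_piq j : tlinear (@piq R D j).
Proof.
split=> [x y|a x]; apply: tot_ext => p q; rewrite /piq /tadd /tscale;
  by case: ifP; rewrite ?addr0 ?scaler0.
Qed.

Lemma tlinear_tadd (f g : T -> T) :
  tlinear f -> tlinear g -> tlinear (fun x => tadd (f x) (g x)).
Proof.
move=> [fD fZ] [gD gZ]; split=> [x y|a x]; rewrite ?fD ?gD ?fZ ?gZ;
  apply: tot_ext => p q; rewrite /tadd /tscale; [exact: addrACA | by rewrite scalerDr].
Qed.

Lemma tlinear_dd : tlinear dd.
Proof.
have lin21 : tlinear (D21 d21) by split=> *; apply: tot_ext => -[|[|p]] q;
  rewrite /tadd /tscale /= ?addr0 ?scaler0 ?linearD ?linearZ.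
have lin10 : tlinear (D10 d10) by split=> *; apply: tot_ext => -[|p] q;
  rewrite /tadd /tscale /= ?addr0 ?scaler0 ?linearD ?linearZ.
have lin01 : tlinear (D01 d01) by split=> *; apply: tot_ext => p [|q];
  rewrite /tadd /tscale /= ?addr0 ?scaler0 ?linearD ?linearZ.
exact: tlinear_tadd (tlinear_tadd lin21 lin10) lin01.
Qed.

Lemma dd_deg k x : inDeg k x -> inDeg k.+1 (dd x).
Proof.
move=> dx p q pq; rewrite /dd /tadd /D21 /D10 /D01.
by case: p pq => [|[|p]]; case: q => [|q] pq /=; vanish.
Qed.

Lemma piq_piq m n (x : T) : piq m (piq n x) = piq (maxn m n) x.
Proof. by apply: tot_ext => p q; rewrite /piq geq_max; case: (m <= q)%N; case: (n <= q)%N. Qed.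

Lemma piq0 (x : T) : piq 0 x = x.
Proof. exact: tot_ext. Qed.

Lemma inDeg_piq k j (x : T) : inDeg k x -> inDeg k (piq j x).
Proof. by move=> dx p q pq; rewrite /piq dx // if_same. Qed.

Lemma bideg_deg i j (x : T) : inBideg i j x -> inDeg (i + j) x.
Proof. by move=> bx p q pq; apply: bx; case; lia. Qed.

Lemma piq_bideg i j k (x : T) : inBideg i j x -> (j < k)%N -> piq k x = t0.
Proof.
move=> bx jk; apply: tot_ext => p q; rewrite /piq; case: ifP => // kq.
by apply: bx => -[_ qj]; lia.
Qed.

Lemma bideg_iff_piqS_eq0 i j (y : T) : inDeg (i + j) y -> piq j y = y ->
  inBideg i j y <-> piq j.+1 y = t0.
Proof.
move=> dy yj; split=> [bj|yj1 p q pq]; first exact: piq_bideg bj _.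
case: (ltngtP q j) => [qj|jq|qj].
- by rewrite -yj /piq leqNgt qj.
- by have := tot_app p q yj1; rewrite /piq jq.
- by apply: dy => pqk; apply: pq; congr pair; lia.
Qed.

Lemma D21_bideg0 p (w : T) : inBideg p 0 w -> D21 d21 w = t0.
Proof. by move=> bw; apply: tot_ext => -[|[|p']] q //=; vanish. Qed.

Lemma piq1_dd_bideg0 p (w : T) : inBideg p 0 w -> piq 1 (dd w) = D01 d01 w.
Proof.
move=> bw; apply: tot_ext => p' [|q]; rewrite /piq //=.
by rewrite /dd /tadd (D21_bideg0 bw) /D10; case: p' => [|p'] /=; vanish.
Qed.

Lemma inNq0_of_piq1_eq0 k (w : T) : inDeg k w -> piq 1 w = t0 -> piq 1 (dd w) = t0 ->
  inNq d21 d01 0 k w.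
Proof.
move=> dw w1 dw1; have bw : inBideg k 0 w.
  by rewrite bideg_iff_piqS_eq0 ?addn0 ?piq0.
rewrite /inNq leq0n subn0; split=> //; split; last exact: D21_bideg0 bw.
by rewrite -(piq1_dd_bideg0 bw).
Qed.

Lemma inNq_bideg j m (w : T) : inNq d21 d01 j m w -> inBideg (m - j) j w.
Proof. by rewrite /inNq; case: leqP => [_ [bw _]|_ -> p q _]. Qed.

Lemma inNq_tzero j m : inNq d21 d01 j m t0.
Proof.
rewrite /inNq; case: leqP => // _.
by split=> //; split; apply: tot_ext => -[|[|p]] [|q] //=; rewrite linear0.
Qed.

Lemma inNq_deg j m (w : T) : inNq d21 d01 j m w -> inDeg m w.
Proof.
rewrite /inNq; case: leqP => [jm [bw _]|_ -> p q _] //.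
by rewrite -(subnK jm); exact: bideg_deg.
Qed.

Lemma bproj_bideg i j (x : T) : inBideg i j (bproj i j x).
Proof.
move=> p q pq; rewrite /bproj.
by case: eqP => [ep|] //; case: eqP => [eq|] //; case: pq; rewrite ep eq.
Qed.

Lemma bproj_id i j (x : T) : inBideg i j x -> bproj i j x = x.
Proof.
move=> bx; apply: tot_ext => p q; rewrite /bproj.
by case: eqP => [->|ne]; case: eqP => [->|ne'] //=; rewrite bx //; case.
Qed.

Lemma dd_rho_rep k (eta : T) : inDeg k eta -> piq 1 (dd eta) = t0 ->
  dd eta = rho_rep d21 d10 k (piq 1 eta) eta.
Proof.
move=> deta h1; apply: tot_ext => p [|q]; last first.
  have := tot_app p q.+1 h1; rewrite /piq /= => ->.
  rewrite /rho_rep /tadd /bproj /tzero.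
  by case: p => [|[|p]] /=; rewrite ?andbF ?linear0 ?addr0.
rewrite /dd /rho_rep /tadd /bproj /piq /=.
case: p => [|[|p]] /=; rewrite ?andbT ?linear0 ?addr0 ?add0r //;
  by do ?[case: eqP => ? //=]; vanish.
Qed.

Lemma piq_dd_top k (e : T) : inDeg k e -> piq k.+1 (dd e) = D01 d01 (bproj 0 k e).
Proof.
move=> de; apply: tot_ext => p q; rewrite /piq /dd /tadd /bproj.
case: leqP => kq; case: p => [|[|p]]; case: q kq => [|q] kq //=;
  by do ?[case: eqP => ? //=]; vanish.
Qed.

Lemma piq2_eq0_bproj_sum k (y : T) : inDeg k.+1 y -> piq 2 y = t0 ->
  y = tadd (bproj k.+1 0 y) (bproj k 1 y).
Proof.
move=> dy y2; apply: tot_ext => p [|[|q]]; rewrite /tadd /bproj /= ?andbT ?andbF.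
- by rewrite addr0; case: eqP => // ?; vanish.
- by rewrite add0r; case: eqP => // ?; vanish.
- by have := tot_app p q.+2 y2; rewrite /piq /= => ->; rewrite addr0.
Qed.

Lemma cobC_imgp k : cobC d21 d10 d01 k = imgp dd (inDeg k).
Proof. by apply: pred_ext => x; split=> [[y [dy ->]]|[y dy ->]]; exists y. Qed.

Lemma calB_imgp k q : calB d21 d10 d01 k q = imgp (piq q) (cobC d21 d10 d01 k).
Proof.
rewrite cobC_imgp (imgp_comp (h := fun y => piq q (dd y))) //.
by apply: pred_ext => x; split=> [[y [dy ->]]|[y dy ->]]; exists y.
Qed.

Lemma submod_ZC k : submod (ZC d21 d10 d01 k).
Proof. exact (submod_kerp (submod_inDeg k) tlinear_dd). Qed.

Lemma submod_cobC k : submod (cobC d21 d10 d01 k).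
Proof. by rewrite cobC_imgp; exact: submod_imgp (submod_inDeg k) tlinear_dd. Qed.

Lemma cobC_sub_ZC k : (forall j (x : T), inDeg j x -> dd (dd x) = t0) ->
  forall x, cobC d21 d10 d01 k x -> ZC d21 d10 d01 k.+1 x.
Proof. by move=> dd2 _ [y [dy ->]]; split; [exact: dd_deg | exact: dd2 dy]. Qed.

Lemma pI_bideg_kerp (A : T -> Prop) i j :
  (forall x, A x -> inDeg (i + j) x /\ piq j x = x) ->
  pI A (inBideg i j) = kerp A (piq j.+1).
Proof.
move=> Adeg; apply: pred_ext => x; rewrite /pI /kerp.
by split=> -[Ax]; have [dx xj] := Adeg x Ax; rewrite bideg_iff_piqS_eq0.
Qed.

Lemma cobC_bideg_kerp k :
  pI (cobC d21 d10 d01 k) (inBideg k.+1 0) = kerp (cobC d21 d10 d01 k) (piq 1).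
Proof.
by apply: pI_bideg_kerp => _ [y [dy ->]]; rewrite addn0 piq0; split=> //; exact: dd_deg.
Qed.

Lemma ZN0_kerp k : ZN d21 d10 d01 0 k = kerp (ZC d21 d10 d01 k) (piq 1).
Proof.
apply: pred_ext => x; split=> [[Nx dx0]|[[dx dx0] x1]].
  have := inNq_bideg Nx; rewrite subn0 => bx.
  by split; [split=> //; exact: inNq_deg Nx | exact: piq_bideg bx _].
split=> //; apply: inNq0_of_piq1_eq0 => //.
by rewrite dx0 (tlinear0 (tlinear_piq 1)).
Qed.

Lemma kerrho_imgp k :
  kerrho d21 d10 d01 k = imgp (piq 1) (ZC d21 d10 d01 k).
Proof.
have [ldd l1] := (tlinear_dd, tlinear_piq 1).
apply: pred_ext => xi; split.
  move=> [[eta [deta [eta1 ->]]] rho0].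
  have [w [Nw rho_w]] := rho0 eta deta erefl eta1.
  have := inNq_bideg Nw; rewrite subn0 => bw.
  have dw := inNq_deg Nw.
  exists (tsub eta w); last by rewrite (tlinearB l1) (piq_bideg bw) ?tsubx0.
  split; first exact: submodB (submod_inDeg k) deta dw.
  by rewrite (tlinearB ldd) (dd_rho_rep deta eta1) rho_w tsubxx.
move=> [eta [deta deta0] ->].
split; first by exists eta; rewrite deta0 tlinear0.
move=> e de e1 de1; exists (tsub e eta); split.
  apply: inNq0_of_piq1_eq0; first exact: submodB (submod_inDeg k) de deta.
    by rewrite (tlinearB l1) e1 tsubxx.
  by rewrite (tlinearB ldd) deta0 tsubx0.
by rewrite (tlinearB ldd) deta0 tsubx0 -e1 -(dd_rho_rep de).
Qed.

Lemma kervarrho_kerp k :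
  kervarrho d21 d10 d01 k.+1 = kerp (kerrho d21 d10 d01 k.+1) (piq 2).
Proof.
apply: (pI_bideg_kerp (i := k)); rewrite kerrho_imgp => _ [eta [deta _] ->].
by rewrite addn1 piq_piq; split=> //; exact: inDeg_piq.
Qed.

Lemma calB_bideg_kerp k :
  pI (calB d21 d10 d01 k 1) (inBideg k 1) = kerp (calB d21 d10 d01 k 1) (piq 2).
Proof.
apply: pI_bideg_kerp; rewrite calB_imgp => _ [_ [y [dy ->]] ->].
by rewrite addn1 piq_piq; split=> //; apply/inDeg_piq/dd_deg.
Qed.

Lemma cob0_imgp k : cob0 d01 k = imgp (piq k.+1) (calB d21 d10 d01 k 1).
Proof.
rewrite calB_imgp cobC_imgp (imgp_comp (f := dd) (h := fun y => piq 1 (dd y))) //.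
rewrite (imgp_comp (h := fun y => piq k.+1 (dd y))) => [|x].
  2: by rewrite piq_piq (maxn_idPl _).
apply: pred_ext => x; split=> [[y [by0 ->]]|[y dy ->]].
  have dy : inDeg k y := bideg_deg by0.
  by exists y => //; rewrite piq_dd_top ?bproj_id.
by exists (bproj 0 k y); split; [exact: bproj_bideg | rewrite piq_dd_top].
Qed.

Lemma calZ_imgp k : calZ d21 d10 d01 k 2 = imgp (piq 2) (kerrho d21 d10 d01 k).
Proof.
have [ldd l2] := (tlinear_dd, tlinear_piq 2).
rewrite kerrho_imgp (imgp_comp (h := piq 2)) => [|x]; last by rewrite piq_piq.
apply: pred_ext => x; split=> [[eta [[deta etaM] [eta2 ->]]]|[eta [deta deta0] ->]].
  have [w0 [Nw0 ew0]] := etaM k.+1 0%N (addn0 _).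
  have [w1 [Nw1 ew1]] := etaM k 1%N (addn1 _).
  have piq2_N j w : inNq d21 d01 j k w -> (j < 2)%N -> piq 2 w = t0.
    by move/inNq_bideg/piq_bideg; apply.
  exists (tsub (tsub eta w1) w0); last first.
    by rewrite !(tlinearB l2) (piq2_N _ _ Nw0) // (piq2_N _ _ Nw1) // !tsubx0.
  have [dw0 dw1] := (inNq_deg Nw0, inNq_deg Nw1).
  split; first exact: submodB (submod_inDeg k) (submodB (submod_inDeg k) deta dw1) dw0.
  rewrite !(tlinearB ldd) -ew0 -ew1 {1}(piq2_eq0_bproj_sum (dd_deg deta) eta2).
  by apply: tot_ext => p q; rewrite /tsub /tadd /topp /tzero addrK subrr.
exists eta; split; last by rewrite deta0 tlinear0.
split=> // i j _; exists t0; split; first exact: inNq_tzero.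
rewrite deta0 (tlinear0 ldd); apply: tot_ext => p q.
by rewrite /bproj /tzero if_same.
Qed.

Lemma submod_kerrho k : submod (kerrho d21 d10 d01 k).
Proof. by rewrite kerrho_imgp; exact: submod_imgp (submod_ZC k) (tlinear_piq 1). Qed.

Lemma submod_calB k q : submod (calB d21 d10 d01 k q).
Proof. by rewrite calB_imgp; exact: submod_imgp (submod_cobC k) (tlinear_piq q). Qed.

End Bigraded.

Theorem theorem5p5 (R : pzRingType) (D : nat -> nat -> lmodType R)
  (d21 : forall p q, {linear D p q.+1 -> D p.+2 q})
  (d10 : forall p q, {linear D p q -> D p.+1 q})
  (d01 : forall p q, {linear D p q -> D p q.+1})
  (dd2 : forall k (x : Tot D), inDeg k x ->
           dd d21 d10 d01 (dd d21 d10 d01 x) = tzero D) :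
  let Z2 := ZC d21 d10 d01 2 in
  let B2 := cobC d21 d10 d01 1 in
  let B2C20 := pI B2 (inBideg 2 0) in
  let Z2N0 := ZN d21 d10 d01 0 2 in
  let krho := kerrho d21 d10 d01 2 in
  let kvrho := kervarrho d21 d10 d01 2 in
  let cB21 := calB d21 d10 d01 1 1 in
  let cB21C11 := pI cB21 (inBideg 1 1) in
  let B2C0 := cob0 d01 1 in
  let cZ22 := calZ d21 d10 d01 2 2 in
  let z := @p0 R D in
  let id := @tid R D in
  diagram33
    (B2C20, z) (B2, z) (cB21, z)
    (Z2N0, z) (Z2, z) (krho, z)
    (Z2N0, B2C20) (Z2, B2) (krho, cB21)
    id (piq 1) id (piq 1) id (piq 1)
    id id id id id id
  /\
  diagram33
    (cB21C11, z) (cB21, z) (B2C0, z)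
    (kvrho, z) (krho, z) (cZ22, z)
    (kvrho, cB21C11) (krho, cB21) (cZ22, B2C0)
    id (piq 2) id (piq 2) id (piq 2)
    id id id id id id.
Proof.
have subBZ k := cobC_sub_ZC (k := k) dd2.
cbv zeta; split.
- rewrite cobC_bideg_kerp ZN0_kerp calB_imgp kerrho_imgp.
  apply: diagram33_kerp_imgp;
    [exact: submod_ZC | exact: submod_cobC | exact: subBZ | exact: tlinear_piq].
- rewrite kervarrho_kerp calB_bideg_kerp (cob0_imgp d21 d10) calZ_imgp.
  apply: diagram33_kerp_imgp; [exact: submod_kerrho | exact: submod_calB | | exact: tlinear_piq].
  by rewrite calB_imgp kerrho_imgp; apply: imgp_sub; exact: subBZ.
Qed.
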